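(* Let $G$ be a group and $S(X)=1$ a system of equations over $G$ which has a solution in $G$. For an arbitrary system $T(X,Y)=1$ over $G$ the following are equivalent: (1) $T(X,Y)=1$ is compatible with $S(X)=1$ and admits an $S$-lift over $G$; (2) $G_{R(S)}$ is a retract of $G_{R(S\cup T)}$, i.e. $G_{R(S)}$ is (canonically) a subgroup of $G_{R(S\cup T)}$ and there is a $G_{R(S)}$-homomorphism $G_{R(S\cup T)}\to G_{R(S)}$.
   Context: $G[Z]=G*F(Z)$; for a system $S$ in variables $Z$ over $G$, $R(S)$ is the intersection of the kernels of all $G$-homomorphisms $G[Z]\to G$ killing $S$ (or $G[Z]$ if none), and $G_{R(S)}=G[Z]/R(S)$; $\mu:X\to G_{R(S)}$ is the canonical map. $T=1$ is compatible with $S=1$ over $G$ if for every solution $U$ of $S=1$ in $G$, $T(U,Y)=1$ has a solution in $G$; it admits an $S$-lift if $T(X^\mu,Y)=1$ has a solution in $G_{R(S)}$. *)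

From mathcomp Require Import all_boot.
Set Implicit Arguments.
Unset Strict Implicit.
Unset Printing Implicit Defensive.

Record group := Group {
  gcar :> Type;
  gmul : gcar -> gcar -> gcar;
  ginv : gcar -> gcar;
  gone : gcar;
  gmulA : forall a b c, gmul a (gmul b c) = gmul (gmul a b) c;
  gmul1 : forall a, gmul a gone = a;
  g1mul : forall a, gmul gone a = a;
  gmulV : forall a, gmul a (ginv a) = gone;
  gVmul : forall a, gmul (ginv a) a = gone
}.

(* Group words with constants from G and variables from V: these represent
   (non-uniquely) the elements of G[V] = G * F(V). *)
Inductive gterm (G V : Type) : Type :=
| Cst : G -> gterm G V
| Var : V -> gterm G V
| One : gterm G V
| Mul : gterm G V -> gterm G V -> gterm G V
| Inv : gterm G V -> gterm G V.
Arguments One {G V}.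

(* A system of equations over G in variables V: a set of elements of G[V]
   (each s in the set stands for the equation s = 1). *)
Definition system (G V : Type) := gterm G V -> Prop.

Fixpoint eval (G : group) (V : Type) (a : V -> G) (t : gterm G V) : G :=
  match t with
  | Cst g => g
  | Var v => a v
  | One => gone G
  | Mul t1 t2 => gmul (eval a t1) (eval a t2)
  | Inv t1 => ginv (eval a t1)
  end.

Definition solution (G : group) (V : Type) (S : system G V) (a : V -> G) :=
  forall s, S s -> eval a s = gone G.

(* t \in R(S): t lies in the kernel of every G-homomorphism G[V] -> G killing S
   (all such homomorphisms are evaluations at solutions); if S has no solution
   this is all of G[V]. *)
Definition radical (G : group) (V : Type) (S : system G V) (t : gterm G V) :=
  forall a : V -> G, solution S a -> eval a t = gone G.

(* Equality of the images of t and t' in G_{R(S)} = G[V]/R(S). *)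
Definition coord_eq (G : group) (V : Type) (S : system G V) (t t' : gterm G V) :=
  radical S (Mul t (Inv t')).

Fixpoint subst (G V W : Type) (f : V -> gterm G W) (t : gterm G V) : gterm G W :=
  match t with
  | Cst g => Cst W g
  | Var v => f v
  | One => One
  | Mul t1 t2 => Mul (subst f t1) (subst f t2)
  | Inv t1 => Inv (subst f t1)
  end.

Definition liftX (G X Y : Type) (t : gterm G X) : gterm G (X + Y) :=
  subst (fun x => Var G (inl x)) t.

Definition sys_union (G X Y : Type) (S : system G X) (T : system G (X + Y))
  : system G (X + Y) :=
  fun t => (exists s, S s /\ t = liftX Y s) \/ T t.

Definition join (A X Y : Type) (U : X -> A) (W : Y -> A) : X + Y -> A :=
  fun z => match z with inl x => U x | inr y => W y end.

Definition compatible (G : group) (X Y : Type) (S : system G X)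
  (T : system G (X + Y)) :=
  forall U : X -> G, solution S U -> exists W : Y -> G, solution T (join U W).

(* T admits an S-lift: T(X^mu, Y) = 1 has a solution in G_{R(S)}, i.e. there are
   w : Y -> G[X] with T(X, w) = 1 in G_{R(S)}. *)
Definition admits_lift (G : group) (X Y : Type) (S : system G X)
  (T : system G (X + Y)) :=
  exists w : Y -> gterm G X,
    forall t, T t -> coord_eq S (subst (join (fun x => Var G x) w) t) One.

(* G_{R(S)} is a retract of G_{R(S u T)}:
   (i) the canonical G-homomorphism G_{R(S)} -> G_{R(S u T)} induced by
       X -> X u Y is injective;
   (ii) there is a G_{R(S)}-homomorphism G_{R(S u T)} -> G_{R(S)}, i.e. a
       G-homomorphism (given by images sigma of the generators X u Y, well
       defined on the quotient) which is the identity on (the image of)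
       G_{R(S)}. *)
Definition is_retract (G : group) (X Y : Type) (S : system G X)
  (T : system G (X + Y)) :=
  (forall t t' : gterm G X,
      coord_eq (sys_union S T) (liftX Y t) (liftX Y t') -> coord_eq S t t')
  /\
  exists sigma : X + Y -> gterm G X,
    (forall t t' : gterm G (X + Y),
        coord_eq (sys_union S T) t t' -> coord_eq S (subst sigma t) (subst sigma t'))
    /\ (forall x : X, coord_eq S (sigma (inl x)) (Var G x)).

(* An element of G_{R(S)} is determined by its values at the solutions of S,
   so everything reduces to evaluation at solutions.  A lift w : Y -> G[X] of
   T is then the same as a family of solutions (U, w(U)) of S u T depending
   uniformly on the solution U of S; in particular it makes T compatible with
   S.  Substituting X -> X, Y -> w gives the retraction G_{R(S u T)} -> G_{R(S)};
   conversely a retraction sigma is, modulo R(S), such a substitution with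
   w := sigma on Y, which is therefore a lift. *)
From mathcomp Require Import all_boot.

Set Implicit Arguments.
Unset Strict Implicit.
Unset Printing Implicit Defensive.

Lemma eval_subst (G : group) (V W : Type) (a : W -> G) (f : V -> gterm G W)
    (t : gterm G V) :
  eval a (subst f t) = eval (fun v => eval a (f v)) t.
Proof. by elim: t => //= [t1 -> t2 ->|t1 ->]. Qed.

Lemma eq_eval (G : group) (V : Type) (a b : V -> G) (t : gterm G V) :
  a =1 b -> eval a t = eval b t.
Proof. by move=> eq_ab; elim: t => //= [t1 -> t2 ->|t1 ->]. Qed.

Lemma gmulV_eq1 (G : group) (a b : G) : gmul a (ginv b) = gone G <-> a = b.
Proof.
split=> [ab1|->]; last exact: gmulV.
by rewrite -[a]gmul1 -(gVmul b) gmulA ab1 g1mul.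
Qed.

Lemma coord_eqP (G : group) (V : Type) (S : system G V) (t t' : gterm G V) :
  coord_eq S t t' <-> forall U, solution S U -> eval U t = eval U t'.
Proof.
by split=> tt' U solU; [apply/gmulV_eq1; exact: tt' | apply/gmulV_eq1; exact: tt'].
Qed.

Section Retract.

Variables (G : group) (X Y : Type) (S : system G X) (T : system G (X + Y)).

Lemma eval_liftX (U : X -> G) (W : Y -> G) (t : gterm G X) :
  eval (join U W) (liftX Y t) = eval U t.
Proof. by rewrite eval_subst. Qed.

Lemma solution_sys_union (U : X -> G) (W : Y -> G) :
  solution (sys_union S T) (join U W) <-> solution S U /\ solution T (join U W).
Proof.
split=> [solUW | [solU solT] t [[s [Ss ->]]|Tt]].
- by split=> [s Ss|t Tt]; [rewrite -(eval_liftX U W); apply: solUW; left; exists s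
                         | apply: solUW; right].
- by rewrite eval_liftX; apply: solU.
- exact: solT.
Qed.

Lemma eval_subst_join (U : X -> G) (w : Y -> gterm G X) (t : gterm G (X + Y)) :
  eval U (subst (join (@Var G X) w) t) = eval (join U (fun y => eval U (w y))) t.
Proof. by rewrite eval_subst; apply: eq_eval => -[]. Qed.

Definition generic_solution (w : Y -> gterm G X) :=
  forall U, solution S U -> solution T (join U (fun y => eval U (w y))).

Lemma admits_liftP :
  admits_lift S T <-> exists w, generic_solution w.
Proof.
split=> -[w lift_w]; exists w.
- move=> U solU t Tt; rewrite -eval_subst_join.
  by apply: (proj1 (coord_eqP _ _ One)) solU; apply: lift_w.
- by move=> t Tt; apply/coord_eqP => U solU; rewrite eval_subst_join; apply: lift_w.
Qed.

Lemma compatible_generic_solution (w : Y -> gterm G X) :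
  generic_solution w -> compatible S T.
Proof. by move=> gen_w U solU; exists (fun y => eval U (w y)); apply: gen_w. Qed.

Lemma coord_eq_liftX : compatible S T ->
  forall t t', coord_eq (sys_union S T) (liftX Y t) (liftX Y t') -> coord_eq S t t'.
Proof.
move=> compat t t' /coord_eqP tt'; apply/coord_eqP => U solU.
have [W solT] := compat U solU.
by rewrite -(eval_liftX U W) -[RHS](eval_liftX U W); apply/tt'/solution_sys_union.
Qed.

Lemma retraction_generic_solution (w : Y -> gterm G X) :
  generic_solution w -> forall t t',
  coord_eq (sys_union S T) t t' ->
  coord_eq S (subst (join (@Var G X) w) t) (subst (join (@Var G X) w) t').
Proof.
move=> gen_w t t' /coord_eqP tt'; apply/coord_eqP => U solU.
by rewrite !eval_subst_join; apply/tt'/solution_sys_union; split; last apply: gen_w.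
Qed.

Lemma retraction_subst_eq (sigma : X + Y -> gterm G X) :
    (forall x, coord_eq S (sigma (inl x)) (Var G x)) ->
  forall U, solution S U -> forall t,
  eval U (subst sigma t) = eval (join U (fun y => eval U (sigma (inr y)))) t.
Proof.
move=> sigma_id U solU t; rewrite eval_subst; apply: eq_eval => -[x|y] //=.
exact: (proj1 (coord_eqP _ _ _) (sigma_id x)).
Qed.

Lemma generic_solution_retraction (sigma : X + Y -> gterm G X) :
    (forall t t', coord_eq (sys_union S T) t t' ->
       coord_eq S (subst sigma t) (subst sigma t')) ->
    (forall x, coord_eq S (sigma (inl x)) (Var G x)) ->
  generic_solution (fun y => sigma (inr y)).
Proof.
move=> sigma_wd sigma_id U solU t Tt.
rewrite -(retraction_subst_eq sigma_id solU).
have /coord_eqP -> // : coord_eq S (subst sigma t) (subst sigma One).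
by apply: sigma_wd; apply/coord_eqP => V solV; apply: solV; right.
Qed.

End Retract.

Theorem mainTheorem9 (G : group) (n m : nat)
  (S : system G 'I_n) (T : system G ('I_n + 'I_m)%type)
  (hS : exists U : 'I_n -> G, solution S U) :
  (compatible S T /\ admits_lift S T) <-> is_retract S T.
Proof.
split=> [[compat /admits_liftP [w gen_w]] | [_ [sigma [sigma_wd sigma_id]]]].
- split; first exact: coord_eq_liftX.
  exists (join (@Var G _) w); split; first exact: retraction_generic_solution.
  by move=> x; apply/coord_eqP.
- have gen := generic_solution_retraction sigma_wd sigma_id.
  split; first exact: compatible_generic_solution gen.
  by apply/admits_liftP; exists (fun y => sigma (inr y)).
Qed.
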